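(* In the setting of the half-isotropic Björling construction (with data $Y_0,\hat Y_0,\psi_0,\gamma_{12}$, frame $P_1,P_2$ and the resulting functions $\mu_1,\mu_2,\rho_1,\rho_2,k_1,k_2,\gamma_{11}$ satisfying the structure equations below), let $y=[Y]$ be the resulting Willmore surface. Then $Y_0(\mathbb I)$ is a curve of umbilic points of $y$ if and only if $k_1=k_2\equiv0$ on $\mathbb I$.
   Context: Light cone model: $\mathbb R^5_1$ with $\langle x,y\rangle=-x_0y_0+\sum_{j=1}^4x_jy_j$; $\mathbb S^3$ the projectivized forward light cone. Data: $\psi_0:\mathbb I\to\mathbb S^4_1=\{\langle x,x\rangle=1\}$ non-constant real analytic; $Y_0$ a real analytic null curve with $\langle Y_0,\psi_0\rangle=\langle Y_0,\psi_0'\rangle=0$, $\langle Y_0',Y_0'\rangle=1$; $\hat Y_0$ real analytic null with $\langle\psi_0,\hat Y_0\rangle=0$, $\langle Y_0,\hat Y_0\rangle=-1$; $\gamma_{12}$ a real analytic function; unit $P_1\equiv Y_{0u}\bmod Y_0$, $P_1\perp\hat Y_0$, $P_2\perp\{\psi_0,Y_0,\hat Y_0,P_1\}$, $\det(Y_0,\hat Y_0,P_1,P_2,\psi_0)=1$; functions defined by $Y_{0u}=-\mu_1Y_0+P_1$, $\hat Y_{0u}=\mu_1\hat Y_0+\rho_1P_1+\rho_2P_2+4\gamma_{11}\psi_0$, $P_{1u}=\mu_2P_2+2k_1\psi_0+\hat Y_0+\rho_1Y_0$, $P_{2u}=-\mu_2P_1-2k_2\psi_0+\rho_2Y_0$,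 $\psi_{0u}=-2k_1P_1+2k_2P_2+4\gamma_{11}Y_0$. The resulting Willmore surface is the unique Willmore surface $y$ on a neighbourhood of $\mathbb I$ (coordinate $z=u+iv$) with canonical lift $Y$ ($\langle Y_z,Y_{\bar z}\rangle=\frac12$, $\langle Y_z,Y_z\rangle=0$) satisfying $Y|_{\mathbb I}=Y_0$, conformal Gauss map $\psi$ with $\psi|_{\mathbb I}=\psi_0$, and $\langle\psi_v|_{\mathbb I},\hat Y_0\rangle$ prescribed by $\gamma_{12}$. A point is umbilic if $\kappa=0$ there, where $Y_{zz}=-\frac s2Y+\kappa$ with $\kappa$ orthogonal to $Y,Y_z,Y_{\bar z},Y_{z\bar z}$. *)

From Stdlib Require Import Reals Lra.
Open Scope R_scope.

Record V5 := mkV5 { x0 : R; x1 : R; x2 : R; x3 : R; x4 : R }.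

Definition comp (X : V5) (i : nat) : R :=
  match i with 0 => x0 X | 1 => x1 X | 2 => x2 X | 3 => x3 X | 4 => x4 X | _ => 0 end.

Definition vadd (X Y : V5) : V5 :=
  mkV5 (x0 X + x0 Y) (x1 X + x1 Y) (x2 X + x2 Y) (x3 X + x3 Y) (x4 X + x4 Y).
Definition vscal (a : R) (X : V5) : V5 :=
  mkV5 (a * x0 X) (a * x1 X) (a * x2 X) (a * x3 X) (a * x4 X).
Definition vzero : V5 := mkV5 0 0 0 0 0.

Definition inner (X Y : V5) : R :=
  - x0 X * x0 Y + x1 X * x1 Y + x2 X * x2 Y + x3 X * x3 Y + x4 X * x4 Y.

Fixpoint sumto (n : nat) (f : nat -> R) : R :=
  match n with O => 0 | S m => sumto m f + f m end.
Definition minor (A : nat -> nat -> R) (j : nat) : nat -> nat -> R :=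
  fun i k => A (S i) (if Nat.ltb k j then k else S k).
Fixpoint det (n : nat) (A : nat -> nat -> R) : R :=
  match n with
  | O => 1
  | S m => sumto n (fun j => (-1) ^ j * A 0%nat j * det m (minor A j))
  end.
(** det(A1,...,A5) of five vectors (as rows; equal to the column version). *)
Definition det5 (A1 A2 A3 A4 A5 : V5) : R :=
  det 5 (fun i j => comp (match i with 0 => A1 | 1 => A2 | 2 => A3 | 3 => A4 | _ => A5 end) j).

(** Complexified vectors: pairs (real part, imaginary part), with the
    complex-bilinear extension of <,>, valued in pairs (Re, Im). *)
Record CV5 := mkCV5 { re : V5; im : V5 }.
Definition cinner (X Y : CV5) : R * R :=
  (inner (re X) (re Y) - inner (im X) (im Y), inner (re X) (im Y) + inner (im X) (re Y)).

Definition inI (a b t : R) : Prop := a < t < b.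

Definition analytic_at (f : R -> R) (t : R) : Prop :=
  exists r, 0 < r /\ exists c : nat -> R,
    forall x, Rabs (x - t) < r -> infinite_sum (fun n => c n * (x - t) ^ n) (f x).
Definition analytic_on (a b : R) (f : R -> R) : Prop :=
  forall t, inI a b t -> analytic_at f t.
Definition vanalytic_on (a b : R) (f : R -> V5) : Prop :=
  forall i, analytic_on a b (fun x => comp (f x) i).

Definition has_deriv (a b : R) (f f' : R -> V5) : Prop :=
  forall t, inI a b t -> forall i,
    derivable_pt_lim (fun x => comp (f x) i) t (comp (f' t) i).

(** Open subsets of the (u,v)-plane, z = u + i v. *)
Definition open2 (U : R -> R -> Prop) : Prop :=
  forall u v, U u v -> exists e, 0 < e /\
    forall u' v', (u' - u) ^ 2 + (v' - v) ^ 2 < e ^ 2 -> U u' v'.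

Definition has_pu (U : R -> R -> Prop) (f g : R -> R -> V5) : Prop :=
  forall u v, U u v -> forall i,
    derivable_pt_lim (fun x => comp (f x v) i) u (comp (g u v) i).
Definition has_pv (U : R -> R -> Prop) (f g : R -> R -> V5) : Prop :=
  forall u v, U u v -> forall i,
    derivable_pt_lim (fun y => comp (f u y) i) v (comp (g u v) i).

Definition smooth2 (U : R -> R -> Prop) (f : R -> R -> V5) : Prop :=
  forall i, exists D : nat -> nat -> R -> R -> R,
    (forall u v, U u v -> D 0%nat 0%nat u v = comp (f u v) i) /\
    (forall k l u v, U u v ->
       derivable_pt_lim (fun x => D k l x v) u (D (S k) l u v) /\
       derivable_pt_lim (fun y => D k l u y) v (D k (S l) u v)).

(** Complex derivatives of Y from its real partials, d/dz = (d/du - i d/dv)/2. *)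
Definition Yz_of (Yu Yv : V5) : CV5 := mkCV5 (vscal (1/2) Yu) (vscal (-1/2) Yv).
Definition Yzb_of (Yu Yv : V5) : CV5 := mkCV5 (vscal (1/2) Yu) (vscal (1/2) Yv).
Definition Yzzb_of (Yuu Yvv : V5) : CV5 := mkCV5 (vscal (1/4) (vadd Yuu Yvv)) vzero.
Definition Yzz_of (Yuu Yuv Yvv : V5) : CV5 :=
  mkCV5 (vscal (1/4) (vadd Yuu (vscal (-1) Yvv))) (vscal (-1/2) Yuv).
Definition creal (X : V5) : CV5 := mkCV5 X vzero.

Definition canonical_lift (U : R -> R -> Prop) (Y Yu Yv : R -> R -> V5) : Prop :=
  forall u v, U u v ->
    inner (Y u v) (Y u v) = 0 /\
    cinner (Yz_of (Yu u v) (Yv u v)) (Yz_of (Yu u v) (Yv u v)) = (0, 0) /\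
    cinner (Yz_of (Yu u v) (Yv u v)) (Yzb_of (Yu u v) (Yv u v)) = (1/2, 0).

Definition conformal_gauss_map (U : R -> R -> Prop)
    (Y Yu Yv Yuu Yvv psi : R -> R -> V5) : Prop :=
  forall u v, U u v ->
    inner (psi u v) (psi u v) = 1 /\
    inner (psi u v) (Y u v) = 0 /\
    cinner (creal (psi u v)) (Yz_of (Yu u v) (Yv u v)) = (0, 0) /\
    cinner (creal (psi u v)) (Yzb_of (Yu u v) (Yv u v)) = (0, 0) /\
    cinner (creal (psi u v)) (Yzzb_of (Yuu u v) (Yvv u v)) = (0, 0).

(** Willmore: the conformal Gauss map is harmonic into S^4_1,
    i.e. psi_uu + psi_vv is normal (parallel to psi). *)
Definition willmore_cgm (U : R -> R -> Prop) (psi psiuu psivv : R -> R -> V5) : Prop :=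
  forall u v, U u v -> exists lam : R,
    vadd (psiuu u v) (psivv u v) = vscal lam (psi u v).

Definition cscal (s : R * R) (X : CV5) : CV5 :=
  mkCV5 (vadd (vscal (fst s) (re X)) (vscal (- snd s) (im X)))
        (vadd (vscal (fst s) (im X)) (vscal (snd s) (re X))).
Definition cadd (X Y : CV5) : CV5 := mkCV5 (vadd (re X) (re Y)) (vadd (im X) (im Y)).
Definition czero : CV5 := mkCV5 vzero vzero.

Definition kappa_decomp (Y Yu Yv Yuu Yuv Yvv : V5) (s : R * R) (kappa : CV5) : Prop :=
  Yzz_of Yuu Yuv Yvv = cadd (cscal (- fst s / 2, - snd s / 2) (creal Y)) kappa /\
  cinner kappa (creal Y) = (0, 0) /\
  cinner kappa (Yz_of Yu Yv) = (0, 0) /\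
  cinner kappa (Yzb_of Yu Yv) = (0, 0) /\
  cinner kappa (Yzzb_of Yuu Yvv) = (0, 0).

Definition umbilic (Y Yu Yv Yuu Yuv Yvv : V5) : Prop :=
  forall s kappa, kappa_decomp Y Yu Yv Yuu Yuv Yvv s kappa -> kappa = czero.

From Pilot Require Import Defs.
From Stdlib Require Import Reals Lra Lia.
Open Scope R_scope.

(* Along the curve the Hopf differential kappa of the canonical lift is orthogonal to
   Y, Y_z, Y_zbar and Y_{z zbar}.  These four vectors and the conformal Gauss map psi
   span R^5_1 (there Y_u = P1 and Y_v = +-P2 modulo Y0), so kappa vanishes exactly when
   its psi-component <psi, Y_zz> does, i.e. when <psi, Y_uu - Y_vv> = <psi, Y_uv> = 0.
   Differentiating <Y_u, psi> = <Y_v, psi> = 0 in u and inserting the structure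
   equation for psi0' gives <psi0, Y_uu> = - <psi0, Y_vv> = 2 k1 and
   <psi0, Y_uv> = -+ 2 k2 along the curve. *)

Lemma inner_sym X Y : inner X Y = inner Y X.
Proof. destruct X, Y; unfold inner; simpl; ring. Qed.

Lemma inner_vadd_l X Y Z : inner (vadd X Y) Z = inner X Z + inner Y Z.
Proof. destruct X, Y, Z; unfold inner, vadd; simpl; ring. Qed.

Lemma inner_vadd_r X Y Z : inner Z (vadd X Y) = inner Z X + inner Z Y.
Proof. destruct X, Y, Z; unfold inner, vadd; simpl; ring. Qed.

Lemma inner_vscal_l c X Z : inner (vscal c X) Z = c * inner X Z.
Proof. destruct X, Z; unfold inner, vscal; simpl; ring. Qed.

Lemma inner_vscal_r c X Z : inner Z (vscal c X) = c * inner Z X.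
Proof. destruct X, Z; unfold inner, vscal; simpl; ring. Qed.

Lemma inner_vzero_l X : inner vzero X = 0.
Proof. destruct X; unfold inner, vzero; simpl; ring. Qed.

Lemma inner_vzero_r X : inner X vzero = 0.
Proof. destruct X; unfold inner, vzero; simpl; ring. Qed.

#[local] Hint Rewrite inner_vadd_l inner_vadd_r inner_vscal_l inner_vscal_r
  inner_vzero_l inner_vzero_r : inner.

Lemma V5_ext (X Y : V5) : (forall i, Defs.comp X i = Defs.comp Y i) -> X = Y.
Proof.
  destruct X, Y; intro H.
  pose proof (H 0%nat); pose proof (H 1%nat); pose proof (H 2%nat);
  pose proof (H 3%nat); pose proof (H 4%nat); simpl in *; subst; reflexivity.
Qed.

Definition lower_index (X : V5) (k : nat) : R :=
  match k with 0 => - x0 X | _ => Defs.comp X k end.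

Definition set_comp (k : nat) (X : V5) (c : R) : V5 :=
  match k with
  | 0 => mkV5 c (x1 X) (x2 X) (x3 X) (x4 X)
  | 1 => mkV5 (x0 X) c (x2 X) (x3 X) (x4 X)
  | 2 => mkV5 (x0 X) (x1 X) c (x3 X) (x4 X)
  | 3 => mkV5 (x0 X) (x1 X) (x2 X) c (x4 X)
  | _ => mkV5 (x0 X) (x1 X) (x2 X) (x3 X) c
  end.

(* Cramer's rule for the linear system [inner e_i X = c_i]. *)
Lemma det5_mul_lower_index (k : nat) (e1 e2 e3 e4 e5 X : V5) : (k <= 4)%nat ->
  det5 e1 e2 e3 e4 e5 * lower_index X k =
  det5 (set_comp k e1 (inner e1 X)) (set_comp k e2 (inner e2 X))
       (set_comp k e3 (inner e3 X)) (set_comp k e4 (inner e4 X))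
       (set_comp k e5 (inner e5 X)).
Proof.
  intro Hk; destruct e1, e2, e3, e4, e5, X.
  do 5 (destruct k as [|k];
    [cbv [det5 det sumto minor Defs.comp Nat.ltb Nat.leb set_comp lower_index inner];
     simpl; ring|]).
  lia.
Qed.

Lemma det5_orth_eq0 (e1 e2 e3 e4 e5 X : V5) : det5 e1 e2 e3 e4 e5 <> 0 ->
  inner e1 X = 0 -> inner e2 X = 0 -> inner e3 X = 0 -> inner e4 X = 0 ->
  inner e5 X = 0 -> X = vzero.
Proof.
  intros Hdet H1 H2 H3 H4 H5.
  assert (Hlow : forall k, (k <= 4)%nat -> lower_index X k = 0).
  { intros k Hk.
    pose proof (det5_mul_lower_index k e1 e2 e3 e4 e5 X Hk) as EX.
    pose proof (det5_mul_lower_index k e1 e2 e3 e4 e5 vzero Hk) as E0.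
    rewrite H1, H2, H3, H4, H5 in EX; rewrite !inner_vzero_r, <- EX in E0.
    apply (Rmult_eq_reg_l (det5 e1 e2 e3 e4 e5)); [|exact Hdet].
    rewrite <- E0; destruct k as [|[|[|[|[|]]]]]; simpl; ring. }
  pose proof (Hlow 0%nat ltac:(lia)); pose proof (Hlow 1%nat ltac:(lia));
  pose proof (Hlow 2%nat ltac:(lia)); pose proof (Hlow 3%nat ltac:(lia));
  pose proof (Hlow 4%nat ltac:(lia)); simpl in *.
  apply V5_ext; intros [|[|[|[|[|]]]]]; simpl; lra.
Qed.

Lemma vsub_eq0 X Y : vadd X (vscal (-1) Y) = vzero -> X = Y.
Proof.
  destruct X, Y; unfold vadd, vscal, vzero; simpl; intro H; injection H; intros.
  f_equal; lra.
Qed.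

Definition lightcone_frame (e0 e1 p1 p2 n : V5) : Prop :=
  inner e0 e0 = 0 /\ inner e1 e1 = 0 /\ inner e0 e1 = -1 /\
  inner e0 p1 = 0 /\ inner e0 p2 = 0 /\ inner e0 n = 0 /\
  inner e1 p1 = 0 /\ inner e1 p2 = 0 /\ inner e1 n = 0 /\
  inner p1 p1 = 1 /\ inner p1 p2 = 0 /\ inner p1 n = 0 /\
  inner p2 p2 = 1 /\ inner p2 n = 0 /\ inner n n = 1 /\
  det5 e0 e1 p1 p2 n <> 0.

Section LightconeFrame.
Variables e0 e1 p1 p2 n : V5.
Hypothesis Hfr : lightcone_frame e0 e1 p1 p2 n.

Lemma lightcone_frame_expansion X :
  X = vadd (vscal (- inner e1 X) e0) (vadd (vscal (- inner e0 X) e1)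
        (vadd (vscal (inner p1 X) p1) (vadd (vscal (inner p2 X) p2) (vscal (inner n X) n)))).
Proof.
  destruct Hfr as (H00 & H11 & H01 & H0p1 & H0p2 & H0n & H1p1 & H1p2 & H1n &
                   Hp1p1 & Hp1p2 & Hp1n & Hp2p2 & Hp2n & Hnn & Hdet).
  apply vsub_eq0, (det5_orth_eq0 e0 e1 p1 p2 n); trivial; autorewrite with inner;
    rewrite ?(inner_sym e1 e0), ?(inner_sym p1 e0), ?(inner_sym p1 e1),
      ?(inner_sym p2 e0), ?(inner_sym p2 e1), ?(inner_sym p2 p1),
      ?(inner_sym n e0), ?(inner_sym n e1), ?(inner_sym n p1), ?(inner_sym n p2);
    rewrite ?H00, ?H11, ?H01, ?H0p1, ?H0p2, ?H0n, ?H1p1, ?H1p2, ?H1n,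
      ?Hp1p1, ?Hp1p2, ?Hp1n, ?Hp2p2, ?Hp2n, ?Hnn; ring.
Qed.

Lemma lightcone_frame_inner X Z :
  inner X Z = - inner e1 X * inner e0 Z - inner e0 X * inner e1 Z
              + inner p1 X * inner p1 Z + inner p2 X * inner p2 Z + inner n X * inner n Z.
Proof. rewrite (lightcone_frame_expansion X) at 1; autorewrite with inner; ring. Qed.

End LightconeFrame.

Lemma derivable_pt_lim_value f x l l' :
  derivable_pt_lim f x l -> l = l' -> derivable_pt_lim f x l'.
Proof. now intros H <-. Qed.

Lemma derivable_pt_lim_plus_fun f g x a b :
  derivable_pt_lim f x a -> derivable_pt_lim g x b ->
  derivable_pt_lim (fun y => f y + g y) x (a + b).
Proof. exact (derivable_pt_lim_plus f g x a b). Qed.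

Lemma derivable_pt_lim_mult_fun f g x a b :
  derivable_pt_lim f x a -> derivable_pt_lim g x b ->
  derivable_pt_lim (fun y => f y * g y) x (a * g x + f x * b).
Proof. exact (derivable_pt_lim_mult f g x a b). Qed.

Lemma derivable_pt_lim_opp_fun f x a :
  derivable_pt_lim f x a -> derivable_pt_lim (fun y => - f y) x (- a).
Proof. exact (derivable_pt_lim_opp f x a). Qed.

Lemma derivable_pt_lim_inner (F G : R -> V5) (dF dG : V5) x :
  (forall i, derivable_pt_lim (fun y => Defs.comp (F y) i) x (Defs.comp dF i)) ->
  (forall i, derivable_pt_lim (fun y => Defs.comp (G y) i) x (Defs.comp dG i)) ->
  derivable_pt_lim (fun y => inner (F y) (G y)) x (inner dF (G x) + inner (F x) dG).
Proof.
  intros HF HG.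
  pose proof (HF 0%nat); pose proof (HF 1%nat); pose proof (HF 2%nat);
  pose proof (HF 3%nat); pose proof (HF 4%nat);
  pose proof (HG 0%nat); pose proof (HG 1%nat); pose proof (HG 2%nat);
  pose proof (HG 3%nat); pose proof (HG 4%nat); simpl in *.
  unfold inner; eapply derivable_pt_lim_value.
  - repeat first [ apply derivable_pt_lim_plus_fun | apply derivable_pt_lim_mult_fun
                 | apply derivable_pt_lim_opp_fun | eassumption ].
  - cbv beta; ring.
Qed.

Lemma derivable_pt_lim_locally_const f x d c a b : a < x < b ->
  (forall z, a < z < b -> f z = c) -> derivable_pt_lim f x d -> d = 0.
Proof.
  intros Hx Hf Hd; apply (uniqueness_limite f x); trivial.
  apply (derivable_pt_lim_locally_ext (fct_cte c) f x a b); trivial.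
  - intros z Hz; symmetry; auto.
  - apply derivable_pt_lim_const.
Qed.

Lemma open2_horizontal U u v : open2 U -> U u v ->
  exists a b, a < u < b /\ forall x, a < x < b -> U x v.
Proof.
  intros HU Huv; destruct (HU u v Huv) as [e [He Hball]].
  exists (u - e), (u + e); split; [lra|].
  intros x Hx; apply Hball; nra.
Qed.

Lemma open2_vertical U u v : open2 U -> U u v ->
  exists a b, a < v < b /\ forall y, a < y < b -> U u y.
Proof.
  intros HU Huv; destruct (HU u v Huv) as [e [He Hball]].
  exists (v - e), (v + e); split; [lra|].
  intros y Hy; apply Hball; nra.
Qed.

Section PartialDerivatives.
Variable U : R -> R -> Prop.
Hypothesis HU : open2 U.

Lemma inner_const_pu F G Fu Gu c : has_pu U F Fu -> has_pu U G Gu ->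
  (forall u v, U u v -> inner (F u v) (G u v) = c) ->
  forall u v, U u v -> inner (Fu u v) (G u v) + inner (F u v) (Gu u v) = 0.
Proof.
  intros HF HG Hc u v Huv.
  destruct (open2_horizontal U u v HU Huv) as (a & b & Hu & Hab).
  apply (derivable_pt_lim_locally_const (fun x => inner (F x v) (G x v)) u _ c a b Hu).
  - intros; apply Hc, Hab; trivial.
  - exact (derivable_pt_lim_inner (fun x => F x v) (fun x => G x v) _ _ u
             (HF u v Huv) (HG u v Huv)).
Qed.

Lemma inner_const_pv F G Fv Gv c : has_pv U F Fv -> has_pv U G Gv ->
  (forall u v, U u v -> inner (F u v) (G u v) = c) ->
  forall u v, U u v -> inner (Fv u v) (G u v) + inner (F u v) (Gv u v) = 0.
Proof.
  intros HF HG Hc u v Huv.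
  destruct (open2_vertical U u v HU Huv) as (a & b & Hv & Hab).
  apply (derivable_pt_lim_locally_const (fun y => inner (F u y) (G u y)) v _ c a b Hv).
  - intros; apply Hc, Hab; trivial.
  - exact (derivable_pt_lim_inner (fun y => F u y) (fun y => G u y) _ _ v
             (HF u v Huv) (HG u v Huv)).
Qed.

(* Schwarz's theorem, read off the tower of mixed partials in [smooth2]. *)
Lemma smooth2_has_pu_pv f fu fv fuv : smooth2 U f ->
  has_pu U f fu -> has_pv U f fv -> has_pv U fu fuv -> has_pu U fv fuv.
Proof.
  intros Hs Hfu Hfv Hfuv u v Huv i.
  destruct (Hs i) as [D [D00 DS]].
  assert (D10 : forall u' v', U u' v' -> D 1%nat 0%nat u' v' = Defs.comp (fu u' v') i).
  { intros u' v' H'; destruct (open2_horizontal U u' v' HU H') as (a & b & Hu & Hab).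
    apply (uniqueness_limite (fun x => D 0%nat 0%nat x v') u'); [apply DS; trivial|].
    apply (derivable_pt_lim_locally_ext (fun x => Defs.comp (f x v') i) _ u' a b); trivial.
    - intros; rewrite D00; auto.
    - apply Hfu; trivial. }
  assert (D01 : forall u' v', U u' v' -> D 0%nat 1%nat u' v' = Defs.comp (fv u' v') i).
  { intros u' v' H'; destruct (open2_vertical U u' v' HU H') as (a & b & Hv & Hab).
    apply (uniqueness_limite (fun y => D 0%nat 0%nat u' y) v'); [apply DS; trivial|].
    apply (derivable_pt_lim_locally_ext (fun y => Defs.comp (f u' y) i) _ v' a b); trivial.
    - intros; rewrite D00; auto.
    - apply Hfv; trivial. }
  assert (D11 : D 1%nat 1%nat u v = Defs.comp (fuv u v) i).
  { destruct (open2_vertical U u v HU Huv) as (a & b & Hv & Hab).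
    apply (uniqueness_limite (fun y => D 1%nat 0%nat u y) v); [apply DS; trivial|].
    apply (derivable_pt_lim_locally_ext (fun y => Defs.comp (fu u y) i) _ v a b); trivial.
    - intros; rewrite D10; auto.
    - apply Hfuv; trivial. }
  destruct (open2_horizontal U u v HU Huv) as (a & b & Hu & Hab).
  rewrite <- D11.
  apply (derivable_pt_lim_locally_ext (fun x => D 0%nat 1%nat x v) _ u a b); trivial.
  - intros; apply D01; auto.
  - apply DS; trivial.
Qed.

End PartialDerivatives.

Lemma has_pu_on_axis U (f fu : R -> R -> V5) (g g' : R -> V5) a b :
  has_pu U f fu -> (forall t, inI a b t -> U t 0) ->
  (forall t, inI a b t -> f t 0 = g t) -> has_deriv a b g g' ->
  forall t, inI a b t -> fu t 0 = g' t.
Proof.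
  intros Hfu HUI Hfg Hg t Ht; apply V5_ext; intro i.
  apply (uniqueness_limite (fun x => Defs.comp (g x) i) t); [|apply Hg; trivial].
  apply (derivable_pt_lim_locally_ext (fun x => Defs.comp (f x 0) i) _ t a b _ Ht).
  - intros z Hz; rewrite Hfg; trivial.
  - apply Hfu, HUI; trivial.
Qed.

Definition canonical_2jet (Y Yu Yv Yuu Yuv Yvv : V5) : Prop :=
  inner Y Y = 0 /\ inner Y Yu = 0 /\ inner Y Yv = 0 /\
  inner Yu Yu = 1 /\ inner Yv Yv = 1 /\ inner Yu Yv = 0 /\
  inner Y Yuu = -1 /\ inner Y Yuv = 0 /\ inner Y Yvv = -1 /\
  inner Yu Yuu = 0 /\ inner Yu Yuv = 0 /\ inner Yu Yvv = 0 /\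
  inner Yv Yuu = 0 /\ inner Yv Yuv = 0 /\ inner Yv Yvv = 0.

Ltac orient_jet Y Yu Yv Yuu Yuv Yvv :=
  rewrite ?(inner_sym Yu Y), ?(inner_sym Yv Y), ?(inner_sym Yuu Y), ?(inner_sym Yuv Y),
    ?(inner_sym Yvv Y), ?(inner_sym Yv Yu), ?(inner_sym Yuu Yu), ?(inner_sym Yuv Yu),
    ?(inner_sym Yvv Yu), ?(inner_sym Yuu Yv), ?(inner_sym Yuv Yv), ?(inner_sym Yvv Yv) in *.

Section CanonicalLift.
Variables (U : R -> R -> Prop) (Y Yu Yv Yuu Yuv Yvv psi psiu : R -> R -> V5).
Hypotheses (HU : open2 U) (HYsm : smooth2 U Y)
  (HYu : has_pu U Y Yu) (HYv : has_pv U Y Yv)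
  (HYuu : has_pu U Yu Yuu) (HYuv : has_pv U Yu Yuv) (HYvv : has_pv U Yv Yvv)
  (Hpsiu : has_pu U psi psiu)
  (Hcan : canonical_lift U Y Yu Yv)
  (Hcgm : conformal_gauss_map U Y Yu Yv Yuu Yvv psi).

Lemma canonical_lift_orthonormal u v : U u v ->
  inner (Y u v) (Y u v) = 0 /\ inner (Yu u v) (Yu u v) = 1 /\
  inner (Yv u v) (Yv u v) = 1 /\ inner (Yu u v) (Yv u v) = 0.
Proof.
  intro Huv; destruct (Hcan u v Huv) as (HYY & Hzz & Hzzb).
  unfold cinner, Yz_of, Yzb_of in Hzz, Hzzb; simpl in Hzz, Hzzb.
  injection Hzz as Hzz1 Hzz2; injection Hzzb as Hzzb1 Hzzb2.
  autorewrite with inner in *; rewrite (inner_sym (Yv u v) (Yu u v)) in *; lra.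
Qed.

Lemma canonical_lift_Y_Yu u v : U u v -> inner (Y u v) (Yu u v) = 0.
Proof.
  intro Huv.
  pose proof (inner_const_pu U HU Y Y Yu Yu 0 HYu HYu
                (fun u v H => proj1 (canonical_lift_orthonormal u v H)) u v Huv) as E.
  rewrite (inner_sym (Yu u v)) in E; lra.
Qed.

Lemma canonical_lift_Y_Yv u v : U u v -> inner (Y u v) (Yv u v) = 0.
Proof.
  intro Huv.
  pose proof (inner_const_pv U HU Y Y Yv Yv 0 HYv HYv
                (fun u v H => proj1 (canonical_lift_orthonormal u v H)) u v Huv) as E.
  rewrite (inner_sym (Yv u v)) in E; lra.
Qed.

Lemma canonical_lift_2jet u v : U u v ->
  canonical_2jet (Y u v) (Yu u v) (Yv u v) (Yuu u v) (Yuv u v) (Yvv u v).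
Proof.
  intro Huv.
  pose proof (smooth2_has_pu_pv U HU Y Yu Yv Yuv HYsm HYu HYv HYuv) as HYvu.
  pose proof canonical_lift_orthonormal as Hon.
  pose proof (Hon u v Huv) as (HYY & HYuYu & HYvYv & HYuYv).
  pose proof (inner_const_pu U HU Y Yu Yu Yuu 0 HYu HYuu canonical_lift_Y_Yu u v Huv).
  pose proof (inner_const_pv U HU Y Yv Yv Yvv 0 HYv HYvv canonical_lift_Y_Yv u v Huv).
  pose proof (inner_const_pv U HU Y Yu Yv Yuv 0 HYv HYuv canonical_lift_Y_Yu u v Huv).
  pose proof (inner_const_pu U HU Yu Yu Yuu Yuu 1 HYuu HYuu
                (fun u v H => proj1 (proj2 (Hon u v H))) u v Huv).
  pose proof (inner_const_pv U HU Yu Yu Yuv Yuv 1 HYuv HYuv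
                (fun u v H => proj1 (proj2 (Hon u v H))) u v Huv).
  pose proof (inner_const_pu U HU Yv Yv Yuv Yuv 1 HYvu HYvu
                (fun u v H => proj1 (proj2 (proj2 (Hon u v H)))) u v Huv).
  pose proof (inner_const_pv U HU Yv Yv Yvv Yvv 1 HYvv HYvv
                (fun u v H => proj1 (proj2 (proj2 (Hon u v H)))) u v Huv).
  pose proof (inner_const_pu U HU Yu Yv Yuu Yuv 0 HYuu HYvu
                (fun u v H => proj2 (proj2 (proj2 (Hon u v H)))) u v Huv).
  pose proof (inner_const_pv U HU Yu Yv Yuv Yvv 0 HYuv HYvv
                (fun u v H => proj2 (proj2 (proj2 (Hon u v H)))) u v Huv).
  pose proof (canonical_lift_Y_Yu u v Huv); pose proof (canonical_lift_Y_Yv u v Huv).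
  unfold canonical_2jet.
  orient_jet (Y u v) (Yu u v) (Yv u v) (Yuu u v) (Yuv u v) (Yvv u v).
  repeat split; lra.
Qed.

Lemma conformal_gauss_map_orthogonal u v : U u v ->
  inner (psi u v) (Y u v) = 0 /\ inner (psi u v) (Yu u v) = 0 /\
  inner (psi u v) (Yv u v) = 0 /\ inner (psi u v) (vadd (Yuu u v) (Yvv u v)) = 0.
Proof.
  intro Huv; destruct (Hcgm u v Huv) as (_ & Hpsi & Hz & Hzb & Hzzb).
  unfold cinner, creal, Yz_of, Yzb_of, Yzzb_of in Hz, Hzb, Hzzb; simpl in Hz, Hzb, Hzzb.
  injection Hz as Hz1 Hz2; injection Hzb as Hzb1 Hzb2; injection Hzzb as Hzzb1 Hzzb2.
  autorewrite with inner in *; lra.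
Qed.

Lemma conformal_gauss_map_pu u v : U u v ->
  inner (psi u v) (Yuu u v) = - inner (Yu u v) (psiu u v) /\
  inner (psi u v) (Yuv u v) = - inner (Yv u v) (psiu u v).
Proof.
  intro Huv.
  pose proof (smooth2_has_pu_pv U HU Y Yu Yv Yuv HYsm HYu HYv HYuv) as HYvu.
  pose proof (inner_const_pu U HU Yu psi Yuu psiu 0 HYuu Hpsiu
    (fun u v H => eq_trans (inner_sym _ _) (proj1 (proj2 (conformal_gauss_map_orthogonal u v H))))
    u v Huv).
  pose proof (inner_const_pu U HU Yv psi Yuv psiu 0 HYvu Hpsiu
    (fun u v H => eq_trans (inner_sym _ _)
                    (proj1 (proj2 (proj2 (conformal_gauss_map_orthogonal u v H))))) u v Huv).
  rewrite (inner_sym (Yuu u v)), (inner_sym (Yuv u v)) in *; lra.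
Qed.

End CanonicalLift.

Lemma Yzz_of_decomp Y Yuu Yuv Yvv s1 s2 :
  Yzz_of Yuu Yuv Yvv = cadd (cscal (- s1 / 2, - s2 / 2) (creal Y))
    (mkCV5 (vadd (vscal (1/4) (vadd Yuu (vscal (-1) Yvv))) (vscal (s1/2) Y))
           (vadd (vscal (-1/2) Yuv) (vscal (s2/2) Y))).
Proof.
  destruct Y, Yuu, Yuv, Yvv; unfold Yzz_of, cadd, cscal, creal, vadd, vscal, vzero; simpl.
  f_equal; f_equal; field.
Qed.

Lemma umbilic_iff_normal_hessian (Y Yu Yv Yuu Yuv Yvv N : V5) :
  canonical_2jet Y Yu Yv Yuu Yuv Yvv -> inner N Y = 0 ->
  (forall X, inner X Y = 0 -> inner X Yu = 0 -> inner X Yv = 0 ->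
     inner X (vadd Yuu Yvv) = 0 -> inner X N = 0 -> X = vzero) ->
  umbilic Y Yu Yv Yuu Yuv Yvv <-> inner N Yuu = inner N Yvv /\ inner N Yuv = 0.
Proof.
  intros Hjet HNY Hspan.
  destruct Hjet as (HYY & HYYu & HYYv & HYuYu & HYvYv & HYuYv & HYYuu & HYYuv & HYYvv &
                    HYuYuu & HYuYuv & HYuYvv & HYvYuu & HYvYuv & HYvYvv).
  split.
  - intro Hum.
    remember (inner (vscal (1/4) (vadd Yuu (vscal (-1) Yvv))) (vadd Yuu Yvv)) as s1.
    remember (inner (vscal (-1/2) Yuv) (vadd Yuu Yvv)) as s2.
    assert (Hk : mkCV5 (vadd (vscal (1/4) (vadd Yuu (vscal (-1) Yvv))) (vscal (s1/2) Y))
                       (vadd (vscal (-1/2) Yuv) (vscal (s2/2) Y)) = czero).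
    { apply (Hum (s1, s2)); split; [apply Yzz_of_decomp|].
      unfold cinner, creal, Yz_of, Yzb_of, Yzzb_of; simpl.
      autorewrite with inner in *.
      orient_jet Y Yu Yv Yuu Yuv Yvv.
      rewrite ?HYY, ?HYYu, ?HYYv, ?HYuYu, ?HYvYv, ?HYuYv, ?HYYuu, ?HYYuv, ?HYYvv,
        ?HYuYuu, ?HYuYuv, ?HYuYvv, ?HYvYuu, ?HYvYuv, ?HYvYvv.
      repeat split; f_equal; lra. }
    pose proof (f_equal (fun Z => inner N (re Z)) Hk) as HNre.
    pose proof (f_equal (fun Z => inner N (im Z)) Hk) as HNim.
    simpl in HNre, HNim; autorewrite with inner in HNre, HNim.
    rewrite HNY in HNre, HNim; split; lra.
  - intros [HNuu HNuv] s [Kre Kim] (Hdec & HKY & HKz & HKzb & HKzzb).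
    pose proof (f_equal (fun Z => inner N (re Z)) Hdec) as HNre.
    pose proof (f_equal (fun Z => inner N (im Z)) Hdec) as HNim.
    unfold Yzz_of, cadd, cscal, creal in HNre, HNim; simpl in HNre, HNim.
    unfold cinner, creal, Yz_of, Yzb_of, Yzzb_of in HKY, HKz, HKzb, HKzzb;
      simpl in HKY, HKz, HKzb, HKzzb.
    injection HKY as HKY1 HKY2; injection HKz as HKz1 HKz2;
      injection HKzb as HKzb1 HKzb2; injection HKzzb as HKzzb1 HKzzb2.
    autorewrite with inner in *.
    rewrite (inner_sym N Kre), (inner_sym N Kim) in *.
    rewrite HNY in HNre, HNim.
    assert (Kre = vzero) as -> by (apply Hspan; autorewrite with inner; lra).
    assert (Kim = vzero) as -> by (apply Hspan; autorewrite with inner; lra).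
    reflexivity.
Qed.

Section BjorlingPoint.
Variables (Y0 Yh P1 P2 psi0 Yu Yv Yuu Yuv Yvv psiu : V5) (mu1 k1 k2 gamma11 : R).
Hypotheses
  (HYhnull : inner Yh Yh = 0) (HYhpsi : inner psi0 Yh = 0) (HYhY0 : inner Y0 Yh = -1)
  (HP1unit : inner P1 P1 = 1) (HP1Yh : inner P1 Yh = 0) (HP2unit : inner P2 P2 = 1)
  (HP2perp : inner P2 psi0 = 0 /\ inner P2 Y0 = 0 /\ inner P2 Yh = 0 /\ inner P2 P1 = 0)
  (Hpsi0unit : inner psi0 psi0 = 1) (Hdet : det5 Y0 Yh P1 P2 psi0 = 1)
  (HYu : Yu = vadd (vscal (- mu1) Y0) P1)
  (Hpsiu : psiu = vadd (vscal (- (2 * k1)) P1) (vadd (vscal (2 * k2) P2) (vscal (4 * gamma11) Y0)))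
  (Hjet : canonical_2jet Y0 Yu Yv Yuu Yuv Yvv)
  (Horth : inner psi0 Y0 = 0 /\ inner psi0 Yu = 0 /\ inner psi0 Yv = 0 /\
           inner psi0 (vadd Yuu Yvv) = 0)
  (Hpu : inner psi0 Yuu = - inner Yu psiu /\ inner psi0 Yuv = - inner Yv psiu).

Lemma bjorling_Y0_P1 : inner Y0 P1 = 0.
Proof.
  destruct Hjet as (HYY & HYYu & _).
  rewrite HYu in HYYu; autorewrite with inner in HYYu; rewrite HYY in HYYu; lra.
Qed.

Lemma bjorling_P1_psi0 : inner P1 psi0 = 0.
Proof.
  destruct Horth as (HpsiY0 & HpsiYu & _).
  rewrite HYu in HpsiYu; autorewrite with inner in HpsiYu.
  rewrite HpsiY0, (inner_sym psi0 P1) in HpsiYu; lra.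
Qed.

Lemma bjorling_frame : lightcone_frame Y0 Yh P1 P2 psi0.
Proof.
  pose proof bjorling_Y0_P1; pose proof bjorling_P1_psi0.
  destruct Hjet as (HYY & _); destruct HP2perp as (HP2psi & HP2Y0 & HP2Yh & HP2P1).
  destruct Horth as (HpsiY0 & _).
  unfold lightcone_frame.
  rewrite (inner_sym Y0 psi0), (inner_sym Y0 P2), (inner_sym Yh P1), (inner_sym Yh P2), (inner_sym Yh psi0),
    (inner_sym P1 P2).
  repeat split; trivial; lra.
Qed.

Lemma bjorling_P1_Yv : inner P1 Yv = 0.
Proof.
  destruct Hjet as (_ & _ & HYYv & _ & _ & HYuYv & _).
  rewrite HYu in HYuYv; autorewrite with inner in HYuYv; rewrite HYYv in HYuYv; lra.
Qed.

Lemma bjorling_P2_Yv_sq : inner P2 Yv ^ 2 = 1.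
Proof.
  destruct Hjet as (_ & _ & HYYv & _ & HYvYv & _); destruct Horth as (_ & _ & HpsiYv & _).
  rewrite (lightcone_frame_inner _ _ _ _ _ bjorling_frame Yv Yv), HYYv, HpsiYv,
    bjorling_P1_Yv in HYvYv.
  lra.
Qed.

Lemma bjorling_span X : inner X Y0 = 0 -> inner X Yu = 0 -> inner X Yv = 0 ->
  inner X (vadd Yuu Yvv) = 0 -> inner X psi0 = 0 -> X = vzero.
Proof.
  intros HXY0 HXYu HXYv HXW HXpsi.
  pose proof bjorling_frame as Hfr.
  pose proof (lightcone_frame_inner _ _ _ _ _ Hfr) as Hparseval.
  assert (HXP1 : inner X P1 = 0).
  { rewrite HYu in HXYu; autorewrite with inner in HXYu; rewrite HXY0 in HXYu; lra. }
  rewrite inner_sym in HXY0, HXP1, HXpsi.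
  assert (HP2X : inner P2 X = 0).
  { destruct Hjet as (_ & _ & HYYv & _); destruct Horth as (_ & _ & HpsiYv & _).
    rewrite Hparseval, HXY0, HXP1, HXpsi, HYYv in HXYv.
    pose proof bjorling_P2_Yv_sq; nra. }
  assert (HYhX : inner Yh X = 0).
  { destruct Hjet as (_ & _ & _ & _ & _ & _ & HYYuu & _ & HYYvv & _).
    rewrite Hparseval, HXY0, HXP1, HXpsi, HP2X in HXW.
    autorewrite with inner in HXW; rewrite HYYuu, HYYvv in HXW; lra. }
  destruct Hfr as (_ & _ & _ & _ & _ & _ & _ & _ & _ & _ & _ & _ & _ & _ & _ & Hdet0).
  exact (det5_orth_eq0 _ _ _ _ _ X Hdet0 HXY0 HYhX HXP1 HP2X HXpsi).
Qed.

Lemma bjorling_psi0_Yuu : inner psi0 Yuu = 2 * k1.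
Proof.
  destruct Hpu as [-> _]; destruct Hjet as (HYY & _).
  destruct HP2perp as (_ & HP2Y0 & _ & HP2P1).
  rewrite HYu, Hpsiu; autorewrite with inner.
  rewrite (inner_sym Y0 P2), (inner_sym P1 Y0), (inner_sym P1 P2), HYY, HP2Y0, HP2P1,
    bjorling_Y0_P1, HP1unit.
  ring.
Qed.

Lemma bjorling_psi0_Yuv : inner psi0 Yuv = - 2 * k2 * inner P2 Yv.
Proof.
  destruct Hpu as [_ ->]; destruct Hjet as (_ & _ & HYYv & _).
  rewrite Hpsiu; autorewrite with inner.
  rewrite (inner_sym Yv P1), (inner_sym Yv P2), (inner_sym Yv Y0), HYYv, bjorling_P1_Yv.
  ring.
Qed.

Lemma bjorling_umbilic_iff : umbilic Y0 Yu Yv Yuu Yuv Yvv <-> k1 = 0 /\ k2 = 0.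
Proof.
  destruct Horth as (HpsiY0 & _ & _ & HpsiW).
  rewrite (umbilic_iff_normal_hessian Y0 Yu Yv Yuu Yuv Yvv psi0 Hjet HpsiY0 bjorling_span).
  autorewrite with inner in HpsiW.
  rewrite bjorling_psi0_Yuv; rewrite bjorling_psi0_Yuu in *.
  pose proof bjorling_P2_Yv_sq.
  split; intros [H1 H2]; split; nra.
Qed.

End BjorlingPoint.

Theorem mainTheorem11
  (a b : R) (Hab : a < b)
  (psi0 psi0u Y0 Y0u Yh0 Yh0u P1 P1u P2 P2u : R -> V5)
  (gamma12 mu1 mu2 rho1 rho2 k1 k2 gamma11 : R -> R)
  (Hpsi0an : vanalytic_on a b psi0)
  (Hpsi0d : has_deriv a b psi0 psi0u)
  (Hpsi0S : forall t, inI a b t -> inner (psi0 t) (psi0 t) = 1)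
  (Hpsi0nc : exists t1 t2, inI a b t1 /\ inI a b t2 /\ psi0 t1 <> psi0 t2)
  (HY0an : vanalytic_on a b Y0)
  (HY0d : has_deriv a b Y0 Y0u)
  (HY0null : forall t, inI a b t -> inner (Y0 t) (Y0 t) = 0)
  (HY0psi : forall t, inI a b t -> inner (Y0 t) (psi0 t) = 0)
  (HY0psiu : forall t, inI a b t -> inner (Y0 t) (psi0u t) = 0)
  (HY0u : forall t, inI a b t -> inner (Y0u t) (Y0u t) = 1)
  (HYh0an : vanalytic_on a b Yh0)
  (HYh0d : has_deriv a b Yh0 Yh0u)
  (HYh0null : forall t, inI a b t -> inner (Yh0 t) (Yh0 t) = 0)
  (HYh0psi : forall t, inI a b t -> inner (psi0 t) (Yh0 t) = 0)
  (HYh0Y0 : forall t, inI a b t -> inner (Y0 t) (Yh0 t) = -1)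
  (Hg12an : analytic_on a b gamma12)
  (HP1d : has_deriv a b P1 P1u)
  (HP2d : has_deriv a b P2 P2u)
  (HP1unit : forall t, inI a b t -> inner (P1 t) (P1 t) = 1)
  (HP1mod : forall t, inI a b t -> exists c, P1 t = vadd (Y0u t) (vscal c (Y0 t)))
  (HP1Yh : forall t, inI a b t -> inner (P1 t) (Yh0 t) = 0)
  (HP2unit : forall t, inI a b t -> inner (P2 t) (P2 t) = 1)
  (HP2perp : forall t, inI a b t ->
     inner (P2 t) (psi0 t) = 0 /\ inner (P2 t) (Y0 t) = 0 /\
     inner (P2 t) (Yh0 t) = 0 /\ inner (P2 t) (P1 t) = 0)
  (Hdet : forall t, inI a b t -> det5 (Y0 t) (Yh0 t) (P1 t) (P2 t) (psi0 t) = 1)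
  (HsY0 : forall t, inI a b t ->
     Y0u t = vadd (vscal (- mu1 t) (Y0 t)) (P1 t))
  (HsYh0 : forall t, inI a b t ->
     Yh0u t = vadd (vscal (mu1 t) (Yh0 t)) (vadd (vscal (rho1 t) (P1 t))
                (vadd (vscal (rho2 t) (P2 t)) (vscal (4 * gamma11 t) (psi0 t)))))
  (HsP1 : forall t, inI a b t ->
     P1u t = vadd (vscal (mu2 t) (P2 t)) (vadd (vscal (2 * k1 t) (psi0 t))
                (vadd (Yh0 t) (vscal (rho1 t) (Y0 t)))))
  (HsP2 : forall t, inI a b t ->
     P2u t = vadd (vscal (- mu2 t) (P1 t)) (vadd (vscal (- (2 * k2 t)) (psi0 t))
                (vscal (rho2 t) (Y0 t))))
  (Hspsi0 : forall t, inI a b t ->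
     psi0u t = vadd (vscal (- (2 * k1 t)) (P1 t)) (vadd (vscal (2 * k2 t) (P2 t))
                (vscal (4 * gamma11 t) (Y0 t))))
  (U : R -> R -> Prop) (HUopen : open2 U) (HUI : forall t, inI a b t -> U t 0)
  (Y Yu Yv Yuu Yuv Yvv psi psiu psiv psiuu psivv : R -> R -> V5)
  (HYsm : smooth2 U Y) (Hpsism : smooth2 U psi)
  (HYu : has_pu U Y Yu) (HYv : has_pv U Y Yv)
  (HYuu : has_pu U Yu Yuu) (HYuv : has_pv U Yu Yuv) (HYvv : has_pv U Yv Yvv)
  (Hpsiu : has_pu U psi psiu) (Hpsiv : has_pv U psi psiv)
  (Hpsiuu : has_pu U psiu psiuu) (Hpsivv : has_pv U psiv psivv)
  (Hcan : canonical_lift U Y Yu Yv)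
  (Hcgm : conformal_gauss_map U Y Yu Yv Yuu Yvv psi)
  (Hwill : willmore_cgm U psi psiuu psivv)
  (HYI : forall t, inI a b t -> Y t 0 = Y0 t)
  (HpsiI : forall t, inI a b t -> psi t 0 = psi0 t)
  (Hg12 : forall t, inI a b t -> inner (psiv t 0) (Yh0 t) = - 4 * gamma12 t) :
  (forall t, inI a b t -> umbilic (Y t 0) (Yu t 0) (Yv t 0) (Yuu t 0) (Yuv t 0) (Yvv t 0))
  <-> (forall t, inI a b t -> k1 t = 0 /\ k2 t = 0).
Proof.
  assert (Hpoint : forall t, inI a b t ->
    umbilic (Y t 0) (Yu t 0) (Yv t 0) (Yuu t 0) (Yuv t 0) (Yvv t 0) <->
    k1 t = 0 /\ k2 t = 0).
  { intros t Ht; pose proof (HUI t Ht) as HU.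
    pose proof (canonical_lift_2jet U Y Yu Yv Yuu Yuv Yvv
                  HUopen HYsm HYu HYv HYuu HYuv HYvv Hcan t 0 HU) as Hjet.
    pose proof (conformal_gauss_map_orthogonal U Y Yu Yv Yuu Yvv psi Hcgm t 0 HU) as Horth.
    pose proof (conformal_gauss_map_pu U Y Yu Yv Yuu Yuv Yvv psi psiu
                  HUopen HYsm HYu HYv HYuu HYuv Hpsiu Hcgm t 0 HU) as Hpu.
    rewrite (HYI t Ht), (HpsiI t Ht),
      (has_pu_on_axis U Y Yu Y0 Y0u a b HYu HUI HYI HY0d t Ht),
      (has_pu_on_axis U psi psiu psi0 psi0u a b Hpsiu HUI HpsiI Hpsi0d t Ht) in *.
    apply (bjorling_umbilic_iff (Y0 t) (Yh0 t) (P1 t) (P2 t) (psi0 t) (Y0u t) (Yv t 0)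
             (Yuu t 0) (Yuv t 0) (Yvv t 0) (psi0u t) (mu1 t) (k1 t) (k2 t) (gamma11 t)); auto. }
  split; intros H t Ht; apply (Hpoint t Ht), H, Ht.
Qed.
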